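(* For every finite set of formulas $\Gamma\cup\{\varphi\}\subseteq For$: $\Gamma \vdash_{\bf Tm} \varphi$ if and only if there exist sets of formulas $\Upsilon,\Upsilon'$ such that $\Gamma\cup\{\circ \delta \ : \ \delta \in \Upsilon\}\cup\{\circ' \gamma \ : \ \gamma \in \Upsilon'\} \vdash_{\bf Km} \varphi$, where $\circ\delta:=\Box\delta\to\Diamond\delta$ and $\circ'\gamma:=(\Box\gamma\to\gamma)\wedge(\Box\neg\gamma\to\neg\gamma)$.
   Context: Formulas are built from a denumerable set of propositional variables by the unary connectives $\neg$, $\Box$ and the binary connective $\to$; $For$ is the set of all formulas. Abbreviations: $\Diamond\alpha:=\neg\Box\neg\alpha$, $\alpha\vee\beta:=\neg\alpha\to\beta$, $\alpha\wedge\beta:=\neg(\alpha\to\neg\beta)$. All Hilbert calculi below have as axioms all instances (over $For$) of the axiom schemas of a standard Hilbert calculus for classical propositional logic in the signature $\{\neg,\to\}$, plus the listed modal schemas, with modus ponens as the only rule; $\Gamma\vdash_{\bf L}\alpha$ means there is a derivation of $\alpha$ from $\Gamma$ in ${\bf L}$. ${\bf Km}$: (K') $\Diamond\alpha\to(\Box(\alpha\to\beta)\to(\Box\alpha\to\Box\beta))$; (K1') $\Diamond\neg\beta\to(\Box(\alpha\to\beta)\to(\Diamond\alpha\to\Diamond\beta))$; (K2') $\Diamond\alpha\to(\Diamond(\alpha\to\beta)\to(\Box\alpha\to\Diamond\beta))$; (M3') $(\Diamond\alpha\vee\Diamond\neg\alpha)\to(\Diamond\beta\to\Diamond(\alpha\to\beta))$;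 (M4') $\Diamond\neg\beta\to(\Diamond\neg\alpha\to\Diamond(\alpha\to\beta))$; (I1) $(\Box\alpha\wedge\Box\neg\alpha)\to(\Box(\alpha\to\beta)\wedge\Box\neg(\alpha\to\beta))$; (I2) $(\Box\beta\wedge\Box\neg\beta)\to(\Box(\alpha\to\beta)\wedge\Box\neg(\alpha\to\beta))$; (M1) $\neg\Diamond\alpha\to\Box(\alpha\to\beta)$; (M2) $\Box\beta\to\Box(\alpha\to\beta)$; (DN1) $\Box\alpha\to\Box\neg\neg\alpha$; (DN2) $\Box\neg\neg\alpha\to\Box\alpha$. ${\bf Tm}$: (K) $\Box(\alpha\to\beta)\to(\Box\alpha\to\Box\beta)$; (K1) $\Box(\alpha\to\beta)\to(\Diamond\alpha\to\Diamond\beta)$; (K2) $\Diamond(\alpha\to\beta)\to(\Box\alpha\to\Diamond\beta)$; (M1); (M2); (M3) $\Diamond\beta\to\Diamond(\alpha\to\beta)$; (M4) $\Diamond\neg\alpha\to\Diamond(\alpha\to\beta)$; (DN1); (DN2); (T) $\Box\alpha\to\alpha$. *)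

From Stdlib Require Import List.
Import ListNotations.

Inductive formula : Type :=
| Var : nat -> formula
| Neg : formula -> formula
| Box : formula -> formula
| Imp : formula -> formula -> formula.

Definition Dia (a : formula) : formula := Neg (Box (Neg a)).
Definition Or (a b : formula) : formula := Imp (Neg a) b.
Definition And (a b : formula) : formula := Neg (Imp a (Neg b)).

(* Standard Hilbert calculus for classical propositional logic in {neg, ->}
   (Lukasiewicz's axioms); modus ponens is the only rule. *)
Inductive CPL_ax : formula -> Prop :=
| A1 a b : CPL_ax (Imp a (Imp b a))
| A2 a b c : CPL_ax (Imp (Imp a (Imp b c)) (Imp (Imp a b) (Imp a c)))
| A3 a b : CPL_ax (Imp (Imp (Neg a) (Neg b)) (Imp b a)).

Inductive Km_ax : formula -> Prop :=
| Km_cpl a : CPL_ax a -> Km_ax a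
| Km_K' a b : Km_ax (Imp (Dia a) (Imp (Box (Imp a b)) (Imp (Box a) (Box b))))
| Km_K1' a b : Km_ax (Imp (Dia (Neg b)) (Imp (Box (Imp a b)) (Imp (Dia a) (Dia b))))
| Km_K2' a b : Km_ax (Imp (Dia a) (Imp (Dia (Imp a b)) (Imp (Box a) (Dia b))))
| Km_M3' a b : Km_ax (Imp (Or (Dia a) (Dia (Neg a))) (Imp (Dia b) (Dia (Imp a b))))
| Km_M4' a b : Km_ax (Imp (Dia (Neg b)) (Imp (Dia (Neg a)) (Dia (Imp a b))))
| Km_I1 a b : Km_ax (Imp (And (Box a) (Box (Neg a)))
                         (And (Box (Imp a b)) (Box (Neg (Imp a b)))))
| Km_I2 a b : Km_ax (Imp (And (Box b) (Box (Neg b)))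
                         (And (Box (Imp a b)) (Box (Neg (Imp a b)))))
| Km_M1 a b : Km_ax (Imp (Neg (Dia a)) (Box (Imp a b)))
| Km_M2 a b : Km_ax (Imp (Box b) (Box (Imp a b)))
| Km_DN1 a : Km_ax (Imp (Box a) (Box (Neg (Neg a))))
| Km_DN2 a : Km_ax (Imp (Box (Neg (Neg a))) (Box a)).

Inductive Tm_ax : formula -> Prop :=
| Tm_cpl a : CPL_ax a -> Tm_ax a
| Tm_K a b : Tm_ax (Imp (Box (Imp a b)) (Imp (Box a) (Box b)))
| Tm_K1 a b : Tm_ax (Imp (Box (Imp a b)) (Imp (Dia a) (Dia b)))
| Tm_K2 a b : Tm_ax (Imp (Dia (Imp a b)) (Imp (Box a) (Dia b)))
| Tm_M1 a b : Tm_ax (Imp (Neg (Dia a)) (Box (Imp a b)))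
| Tm_M2 a b : Tm_ax (Imp (Box b) (Box (Imp a b)))
| Tm_M3 a b : Tm_ax (Imp (Dia b) (Dia (Imp a b)))
| Tm_M4 a b : Tm_ax (Imp (Dia (Neg a)) (Dia (Imp a b)))
| Tm_DN1 a : Tm_ax (Imp (Box a) (Box (Neg (Neg a))))
| Tm_DN2 a : Tm_ax (Imp (Box (Neg (Neg a))) (Box a))
| Tm_T a : Tm_ax (Imp (Box a) a).

Inductive derivable (Ax : formula -> Prop) (Gamma : formula -> Prop)
  : formula -> Prop :=
| d_hyp a : Gamma a -> derivable Ax Gamma a
| d_ax a : Ax a -> derivable Ax Gamma a
| d_mp a b : derivable Ax Gamma (Imp a b) -> derivable Ax Gamma a ->
             derivable Ax Gamma b.

Definition Km_derives := derivable Km_ax.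
Definition Tm_derives := derivable Tm_ax.

Definition circ (d : formula) : formula := Imp (Box d) (Dia d).
Definition circ' (g : formula) : formula :=
  And (Imp (Box g) g) (Imp (Box (Neg g)) (Neg g)).

Definition set_of_list (l : list formula) : formula -> Prop := fun x => In x l.

From Stdlib Require Import List.

(* With axiom T, every [circ d] and [circ' g] is a theorem of Tm, each primed
   axiom of Km is a weakening of the corresponding Tm axiom, and I1, I2 have
   an antecedent refuted by T; so Tm derives everything Km derives from such
   premises.  Conversely, with all instances of [circ] and [circ'] as premises,
   Km recovers T from [circ'] and [Box a -> Dia a] from [circ], which discharges
   the extra antecedent of K', K2' and M3'; K1' and M4' are used by cases on
   [Dia (Neg b)], the other case giving [Dia b] via [Box b].  Hence one may
   take Ups = Ups' = all formulas. *)

Set Implicit Arguments.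

Definition extend (G : formula -> Prop) (a : formula) : formula -> Prop :=
  fun x => G x \/ x = a.

Lemma derivable_transfer (Ax Ax' G G' : formula -> Prop) (phi : formula) :
  (forall a, Ax a -> derivable Ax' G' a) ->
  (forall a, G a -> derivable Ax' G' a) ->
  derivable Ax G phi -> derivable Ax' G' phi.
Proof.
  intros Hax Hhyp D.
  induction D as [a Ga | a Axa | a b _ IHab _ IHa].
  - exact (Hhyp a Ga).
  - exact (Hax a Axa).
  - apply d_mp with a; assumption.
Qed.

Section Propositional.

Context {Ax : formula -> Prop}.
Hypothesis Ax_cpl : forall a, CPL_ax a -> Ax a.
Implicit Types (G : formula -> Prop) (a b c p q r s : formula).

Local Ltac cpl_ax := apply d_ax, Ax_cpl; constructor.

Lemma extend_derivable G a b :
  derivable Ax G b -> derivable Ax (extend G a) b.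
Proof.
  apply derivable_transfer; [apply d_ax |].
  intros x Gx; apply d_hyp; left; exact Gx.
Qed.

Lemma extend_hyp G a : derivable Ax (extend G a) a.
Proof. apply d_hyp; right; reflexivity. Qed.

Lemma imp_refl G a : derivable Ax G (Imp a a).
Proof.
  apply d_mp with (Imp a (Imp a a)).
  - apply d_mp with (Imp a (Imp (Imp a a) a)); cpl_ax.
  - cpl_ax.
Qed.

Lemma deduction G a b :
  derivable Ax (extend G a) b -> derivable Ax G (Imp a b).
Proof.
  intro D; induction D as [x [Gx | ->] | x Axx | x y _ IHxy _ IHx].
  - apply d_mp with x; [cpl_ax | apply d_hyp; exact Gx].
  - apply imp_refl.
  - apply d_mp with x; [cpl_ax | apply d_ax; exact Axx].
  - apply d_mp with (Imp a x); [| exact IHx].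
    apply d_mp with (Imp a (Imp x y)); [cpl_ax | exact IHxy].
Qed.

Lemma imp_const G a b : derivable Ax G b -> derivable Ax G (Imp a b).
Proof. intro H; apply d_mp with b; [cpl_ax | exact H]. Qed.

Lemma imp_trans G a b c :
  derivable Ax G (Imp a b) -> derivable Ax G (Imp b c) ->
  derivable Ax G (Imp a c).
Proof.
  intros Hab Hbc; apply deduction.
  apply d_mp with b; [apply extend_derivable, Hbc |].
  apply d_mp with a; [apply extend_derivable, Hab | apply extend_hyp].
Qed.

Lemma efq G a b : derivable Ax G (Imp (Neg a) (Imp a b)).
Proof.
  apply deduction, deduction.
  apply d_mp with a; [| apply extend_hyp].
  apply d_mp with (Imp (Neg b) (Neg a)); [cpl_ax |].
  apply imp_const, extend_derivable, extend_hyp.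
Qed.

Lemma dne G a : derivable Ax G (Imp (Neg (Neg a)) a).
Proof.
  apply deduction.
  apply d_mp with (Neg (Neg a)); [| apply extend_hyp].
  apply d_mp with (Imp (Neg a) (Neg (Neg (Neg a)))); [cpl_ax |].
  apply d_mp with (Imp (Neg (Neg (Neg (Neg a)))) (Neg (Neg a))); [cpl_ax |].
  apply imp_const, extend_hyp.
Qed.

Lemma dni G a : derivable Ax G (Imp a (Neg (Neg a))).
Proof.
  apply d_mp with (Imp (Neg (Neg (Neg a))) (Neg a)); [cpl_ax | apply dne].
Qed.

Lemma contrapose G a b :
  derivable Ax G (Imp a b) -> derivable Ax G (Imp (Neg b) (Neg a)).
Proof.
  intro Hab.
  apply d_mp with (Imp (Neg (Neg a)) (Neg (Neg b))); [cpl_ax |].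
  apply imp_trans with a; [apply dne |].
  apply imp_trans with b; [exact Hab | apply dni].
Qed.

Lemma consequentia_mirabilis G q : derivable Ax G (Imp (Imp (Neg q) q) q).
Proof.
  apply deduction.
  apply d_mp with (Imp (Neg q) q); [| apply extend_hyp].
  apply d_mp with (Imp (Neg q) (Neg (Imp (Neg q) q))); [cpl_ax |].
  apply deduction.
  apply d_mp with q.
  - apply d_mp with (Neg q); [apply efq | apply extend_hyp].
  - apply d_mp with (Neg q); [apply extend_derivable, extend_hyp | apply extend_hyp].
Qed.

Lemma by_cases G p q :
  derivable Ax G (Imp p q) -> derivable Ax G (Imp (Neg p) q) ->
  derivable Ax G q.
Proof.
  intros Hp Hnp.
  apply d_mp with (Imp (Neg q) q); [apply consequentia_mirabilis |].
  apply imp_trans with (Neg p); [apply contrapose, Hp | exact Hnp].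
Qed.

Lemma and_intro G a b :
  derivable Ax G a -> derivable Ax G b -> derivable Ax G (And a b).
Proof.
  intros Ha Hb.
  apply d_mp with (Neg (Neg b)); [| apply d_mp with b; [apply dni | exact Hb]].
  apply contrapose, deduction.
  apply d_mp with a; [apply extend_hyp | apply extend_derivable, Ha].
Qed.

Lemma and_elim_l G a b : derivable Ax G (Imp (And a b) a).
Proof. apply imp_trans with (Neg (Neg a)); [apply contrapose, efq | apply dne]. Qed.

Lemma and_elim_r G a b : derivable Ax G (Imp (And a b) b).
Proof.
  apply imp_trans with (Neg (Neg b)); [| apply dne].
  apply contrapose; cpl_ax.
Qed.

Lemma imp_absurd G p a c :
  derivable Ax G (Imp p a) -> derivable Ax G (Imp p (Neg a)) ->
  derivable Ax G (Imp p c).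
Proof.
  intros Ha Hna; apply deduction.
  apply d_mp with a.
  - apply d_mp with (Neg a); [apply efq |].
    apply d_mp with p; [apply extend_derivable, Hna | apply extend_hyp].
  - apply d_mp with p; [apply extend_derivable, Ha | apply extend_hyp].
Qed.

Lemma discharge_antecedent G p q r s :
  derivable Ax G (Imp p (Imp q (Imp r s))) -> derivable Ax G (Imp r p) ->
  derivable Ax G (Imp q (Imp r s)).
Proof.
  intros H Hrp; apply deduction, deduction.
  apply d_mp with r; [| apply extend_hyp].
  apply d_mp with q; [| apply extend_derivable, extend_hyp].
  apply d_mp with p; [apply extend_derivable, extend_derivable, H |].
  apply d_mp with r; [apply extend_derivable, extend_derivable, Hrp | apply extend_hyp].
Qed.

End Propositional.

Lemma Tm_circ G d : derivable Tm_ax G (circ d).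
Proof.
  apply (imp_trans Tm_cpl) with d; [apply d_ax, Tm_T |].
  apply (imp_trans Tm_cpl) with (Neg (Neg d)); [apply (dni Tm_cpl) |].
  apply (contrapose Tm_cpl), d_ax, Tm_T.
Qed.

Lemma Tm_circ' G g : derivable Tm_ax G (circ' g).
Proof. apply (and_intro Tm_cpl); apply d_ax, Tm_T. Qed.

Lemma Tm_box_contradiction G a c :
  derivable Tm_ax G (Imp (And (Box a) (Box (Neg a))) c).
Proof.
  apply (imp_absurd Tm_cpl) with a.
  - apply (imp_trans Tm_cpl) with (Box a); [apply (and_elim_l Tm_cpl) | apply d_ax, Tm_T].
  - apply (imp_trans Tm_cpl) with (Box (Neg a)); [apply (and_elim_r Tm_cpl) | apply d_ax, Tm_T].
Qed.

Lemma Tm_derives_Km_ax G a : Km_ax a -> derivable Tm_ax G a.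
Proof.
  intros [x Hx | | | | | | | | | | |].
  - apply d_ax, Tm_cpl, Hx.
  - apply (imp_const Tm_cpl), d_ax, Tm_K.
  - apply (imp_const Tm_cpl), d_ax, Tm_K1.
  - apply (imp_const Tm_cpl), d_ax, Tm_K2.
  - apply (imp_const Tm_cpl), d_ax, Tm_M3.
  - apply (imp_const Tm_cpl), d_ax, Tm_M4.
  - apply Tm_box_contradiction.
  - apply Tm_box_contradiction.
  - apply d_ax, Tm_M1.
  - apply d_ax, Tm_M2.
  - apply d_ax, Tm_DN1.
  - apply d_ax, Tm_DN2.
Qed.

Section Km_with_circ.

Variable D : formula -> Prop.
Hypothesis D_circ : forall d, D (circ d).
Hypothesis D_circ' : forall g, D (circ' g).

Lemma Km_box_dia a : derivable Km_ax D (Imp (Box a) (Dia a)).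
Proof. apply d_hyp, D_circ. Qed.

Lemma Km_T a : derivable Km_ax D (Imp (Box a) a).
Proof. apply d_mp with (circ' a); [apply (and_elim_l Km_cpl) | apply d_hyp, D_circ']. Qed.

(* [Neg (Dia (Neg b))] is literally [Neg (Neg (Box (Neg (Neg b))))]. *)
Lemma Km_dia_of_not_dia_neg b : derivable Km_ax D (Imp (Neg (Dia (Neg b))) (Dia b)).
Proof.
  apply (imp_trans Km_cpl) with (Box (Neg (Neg b))); [apply (dne Km_cpl) |].
  apply (imp_trans Km_cpl) with (Box b); [apply d_ax, Km_DN2 | apply Km_box_dia].
Qed.

(* The disjunction is [Neg (Dia a) -> Dia (Neg a)]. *)
Lemma Km_M3 a b : derivable Km_ax D (Imp (Dia b) (Dia (Imp a b))).
Proof.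
  apply d_mp with (Or (Dia a) (Dia (Neg a))); [apply d_ax, Km_M3' |].
  apply (imp_trans Km_cpl) with (Box (Neg a)); [apply (dne Km_cpl) | apply Km_box_dia].
Qed.

Lemma Km_derives_Tm_ax a : Tm_ax a -> derivable Km_ax D a.
Proof.
  intros [x Hx | a' b | a' b | a' b | a' b | a' b | a' b | a' b | a' | a' | a'].
  - apply d_ax, Km_cpl, Hx.
  - apply (discharge_antecedent Km_cpl) with (Dia a'); [apply d_ax, Km_K' | apply Km_box_dia].
  - apply (by_cases Km_cpl) with (Dia (Neg b)); [apply d_ax, Km_K1' |].
    apply (imp_trans Km_cpl) with (Dia b); [apply Km_dia_of_not_dia_neg |].
    apply (imp_trans Km_cpl) with (Imp (Dia a') (Dia b)); apply d_ax, Km_cpl, A1.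
  - apply (discharge_antecedent Km_cpl) with (Dia a'); [apply d_ax, Km_K2' | apply Km_box_dia].
  - apply d_ax, Km_M1.
  - apply d_ax, Km_M2.
  - apply Km_M3.
  - apply (by_cases Km_cpl) with (Dia (Neg b)); [apply d_ax, Km_M4' |].
    apply (imp_trans Km_cpl) with (Dia b); [apply Km_dia_of_not_dia_neg |].
    apply (imp_trans Km_cpl) with (Dia (Imp a' b)); [apply Km_M3 |].
    apply d_ax, Km_cpl, A1.
  - apply d_ax, Km_DN1.
  - apply d_ax, Km_DN2.
  - apply Km_T.
Qed.

End Km_with_circ.

Theorem mainTheorem9 (Gamma : list formula) (phi : formula) :
  Tm_derives (set_of_list Gamma) phi <->
  exists (Ups Ups' : formula -> Prop),
    Km_derives
      (fun x => set_of_list Gamma x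
                \/ (exists d, Ups d /\ x = circ d)
                \/ (exists g, Ups' g /\ x = circ' g))
      phi.
Proof.
  split.
  - intro H; exists (fun _ => True), (fun _ => True).
    eapply derivable_transfer; [| | exact H].
    + apply Km_derives_Tm_ax; intros; right; [left | right]; eauto.
    + intros x Hx; apply d_hyp; left; exact Hx.
  - intros (Ups & Ups' & H).
    eapply derivable_transfer; [| | exact H].
    + apply Tm_derives_Km_ax.
    + intros x [Hx | [(d & _ & ->) | (g & _ & ->)]].
      * apply d_hyp; exact Hx.
      * apply Tm_circ.
      * apply Tm_circ'.
Qed.
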